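(* Let $H=(V_H,E_H)$ be a graph on $n$ vertices with vertex weights $c:V_H\to[0,1]$, $y\mapsto c_y$. Let $T\subseteq V_H$ with $|T|=n'=n/2$, let $k\le n'/12$ be an integer, and let $S$ be a uniformly random subset of $T$ of size $k$. Then $$\Pr\Big\{\forall x\in V_H:\ \sum_{\substack{(x,y)\in E_H\\ y\in S}}c_y\le\frac{4k}{n'}\sum_{\substack{(x,y)\in E_H\\ y\in V_H\setminus S}}c_y+2\log n\Big\}\ \ge\ 1-o(1),$$ where $o(1)\to0$ as $n\to\infty$. *)

From HB Require Import structures.
From mathcomp Require Import all_boot all_order all_algebra.
From mathcomp Require Import all_classical all_reals all_analysis.
Set Implicit Arguments. Unset Strict Implicit. Unset Printing Implicit Defensive.
Import Order.TTheory GRing.Theory Num.Theory.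
Local Open Scope ring_scope.

Definition simple_graph (n : nat) (e : rel 'I_n) : Prop :=
  (forall x y, e x y = e y x) /\ (forall x, ~~ e x x).

Definition good_set (R : realType) (n : nat) (e : rel 'I_n) (c : 'I_n -> R)
    (k : nat) (S : {set 'I_n}) : bool :=
  [forall x : 'I_n,
     \sum_(y in S | e x y) c y
       <= (4 * k)%:R / (n./2)%:R * \sum_(y in ~: S | e x y) c y
          + 2 * ln (n%:R : R)].

(* Probability that a uniformly random k-subset S of T is good:
   (number of good k-subsets of T) / C(|T|, k). *)
Definition prob_good (R : realType) (n : nat) (e : rel 'I_n) (c : 'I_n -> R)
    (T : {set 'I_n}) (k : nat) : R :=
  (#|[set S : {set 'I_n} | (S \subset T) && (#|S| == k) && good_set e c k S]|)%:R
    / ('C(#|T|, k))%:R.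

From HB Require Import structures.
From mathcomp Require Import all_boot all_order all_algebra.
From mathcomp Require Import all_classical all_reals all_analysis.
From mathcomp Require Import ring lra zify.
Set Implicit Arguments. Unset Strict Implicit. Unset Printing Implicit Defensive.
Import Order.TTheory GRing.Theory Num.Theory numFieldNormedType.Exports.
Local Open Scope ring_scope.

(* Fix a vertex x, let a y be c y on the neighbours of x and 0 elsewhere, and
   X := \sum_(y in S) a y.  Expanding \prod_(y in S) (1 + b y) over the subsets
   A of S and counting the k-subsets of T that contain A shows that, for
   b >= 0, the mean of \prod_(y in S) (1 + b y) over S is at most
   exp (k / |T| * \sum_(y in T) b y).  Since exp (4 a / 3) <= 1 + 3 a on [0, 1]
   (convexity and e^(4/3) <= 4), this bounds the exponential moment of X, and
   Markov's inequality shows that the inequality fails at x with probability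
   at most exp (- 2 ln n) = n^-2.  A union bound over the n vertices leaves a
   failure probability of at most 1 / n. *)

Lemma card_bigcup_leq (I T : finType) (P : pred I) (A : I -> {set T}) :
  (#|\bigcup_(i | P i) A i| <= \sum_(i | P i) #|A i|)%N.
Proof.
elim/big_ind2: _ => [|m U p V mU pV|//]; first by rewrite cards0.
rewrite -(leq_add2r #|U :&: V|) cardsUI.
exact: leq_trans (leq_add mU pV) (leq_addr _ _).
Qed.

Lemma prod1D_sum_subset (R : comPzSemiRingType) (I : finType) (S : {set I})
    (f : I -> R) :
  \prod_(y in S) (1 + f y) = \sum_(A : {set I} | A \subset S) \prod_(y in A) f y.
Proof.
rewrite big_mkcond /=.
transitivity (\prod_y ((if y \in S then f y else 0) + 1)).
  by apply: eq_bigr => y _; case: ifP => _; rewrite ?addr0 ?add0r // addrC.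
rewrite bigA_distr [RHS]big_mkcond /=; apply: eq_bigr => A _.
case: ifP => AS.
- rewrite [RHS]big_mkcond /=; apply: eq_bigr => y _.
  by case: ifP => yA //; rewrite (fintype.subsetP AS).
- have [y yA yS] : exists2 y, y \in A & y \notin S by apply/subsetPn; rewrite AS.
  by rewrite (bigD1 y) //= yA (negbTE yS) mul0r.
Qed.

Lemma leq_binB_mul_exp (N k j : nat) : (j <= k)%N -> (k <= N)%N ->
  ('C(N - j, k - j) * N ^ j <= 'C(N, k) * k ^ j)%N.
Proof.
move=> + kN; elim: j => [|j IH] jk; first by rewrite !subn0 !expn0.
have {IH} := IH (ltnW jk).
set C0 := 'C(N - j, k - j); set C1 := 'C(N - j.+1, k - j.+1) => IH.
have Pascal : ((N - j) * C1 = (k - j) * C0)%N.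
  have := mul_bin_diag (N - j) (k - j.+1).
  have -> : ((N - j).-1 = N - j.+1)%N by lia.
  by have -> : ((k - j.+1).+1 = k - j)%N by lia.
have step : (C1 * N <= k * C0)%N.
  have kjN : ((k - j) * N <= k * (N - j))%N by nia.
  rewrite -(@leq_pmul2l (N - j)%N) ?subn_gt0 ?(leq_trans jk) //.
  rewrite mulnA Pascal mulnAC (mulnC k) mulnA [X in (_ <= X)%N]mulnAC.
  by rewrite leq_mul2r (mulnC (N - j)%N) kjN orbT.
rewrite expnS mulnA (expnS k) mulnCA.
apply: leq_trans (leq_mul step (leqnn _)) _.
by rewrite -mulnA leq_mul2l IH orbT.
Qed.

Definition draws (I : finType) (T : {set I}) (k : nat) : {set {set I}} :=
  [set S : {set I} | S \subset T & #|S| == k].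

Section UniformDraws.

Variables (R : numFieldType) (I : finType) (T : {set I}) (k : nat).
Hypothesis k_le_T : (k <= #|T|)%N.

Lemma card_draws_supset_le (A : {set I}) : A \subset T ->
  (#|[set S in draws T k | A \subset S]|%:R : R)
    <= 'C(#|T|, k)%:R * (k%:R / #|T|%:R) ^+ #|A|.
Proof.
move=> AT; set X := [set S in draws T k | A \subset S].
have [A_le_k|k_lt_A] := leqP #|A| k; last first.
  suff -> : X = finset.set0 by rewrite cards0 mulr_ge0 ?exprn_ge0 ?divr_ge0.
  apply/setP => S; rewrite !inE; apply/negP => /andP[/andP[_ /eqP Sk] AS].
  by move: (subset_leq_card AS); rewrite Sk leqNgt k_lt_A.
have injX : {in X &, injective (fun S => S :\: A)}.
  move=> S1 S2; rewrite !inE => /andP[_ AS1] /andP[_ AS2] eqD.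
  by rewrite -(setID S1 A) -(setID S2 A) (finset.setIidPr AS1) (finset.setIidPr AS2) eqD.
have imX : [set S :\: A | S in X] \subset draws (T :\: A) (k - #|A|).
  apply/fintype.subsetP => B /imsetP[S]; rewrite !inE => /andP[/andP[ST /eqP Sk] AS] ->.
  by rewrite finset.setSD //= cardsDS // Sk eqxx.
have := subset_leq_card imX.
rewrite card_in_imset // cards_draws cardsDS // => X_le.
have := leq_binB_mul_exp A_le_k k_le_T.
move=> /(leq_trans (leq_mul X_le (leqnn _))).
rewrite -(ler_nat R) !natrM !natrX expr_div_n mulrA ler_pdivlMr //.
by have := subset_leq_card AT; rewrite -natrX ltr0n expn_gt0; lia.
Qed.

Lemma sum_draws_prod1D_le (b : I -> R) : (forall y, 0 <= b y) ->
  \sum_(S in draws T k) \prod_(y in S) (1 + b y)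
    <= 'C(#|T|, k)%:R * \prod_(y in T) (1 + k%:R / #|T|%:R * b y).
Proof.
move=> b_ge0; set p := k%:R / #|T|%:R.
rewrite (eq_bigr (fun S : {set I} => \sum_(A : {set I} | A \subset S) \prod_(y in A) b y));
  last by move=> S _; rewrite prod1D_sum_subset.
rewrite (exchange_big_dep (fun A : {set I} => A \subset T)) /=; last first.
  by move=> S A; rewrite inE => /andP[ST _] AS; apply: fintype.subset_trans ST.
rewrite (prod1D_sum_subset _ (fun y => p * b y)) mulr_sumr.
apply: ler_sum => A AT.
rewrite (eq_bigl (mem [set S in draws T k | A \subset S])); last first.
  by move=> S; rewrite !inE.
rewrite sumr_const -[_ *+ _]mulr_natr big_split /= prodr_const mulrA [X in _ <= X]mulrC.
by apply: ler_wpM2l; [exact: prodr_ge0 | exact: card_draws_supset_le].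
Qed.

End UniformDraws.

Section ExponentialMoments.

Variable R : realType.

Lemma expRM_le_chord (l a : R) : 0 <= a <= 1 -> expR (l * a) <= 1 + (expR l - 1) * a.
Proof.
case/andP => a0 a1; have := convex_expR (Itv01 a0 a1) l 0.
rewrite !convRE /= expR0 mulr0 addr0 mulr1 (mulrC l).
by change (unstable.onem a) with (1 - a); lra.
Qed.

Lemma expR_four_thirds_le : expR (4 / 3 : R) <= 4.
Proof.
have e30 : expR (1 / 30 : R) <= 30 / 29.
  have : 29 / 30 <= (expR (1 / 30 : R))^-1.
    by rewrite -expRN; apply: le_trans (expR_ge1Dx _); lra.
  have e_gt0 := expR_gt0 (1 / 30 : R); have := divff (lt0r_neq0 e_gt0); nra.
rewrite (_ : 4 / 3 = 40%:R * (1 / 30)); last by lra.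
rewrite expRM_natl; apply: le_trans (_ : (30 / 29 : R) ^+ 40 <= 4); last by lra.
by apply: lerXn2r; rewrite ?nnegrE ?expR_ge0 //; lra.
Qed.

Lemma expR_sum_le_prod1D (I : finType) (S : {set I}) (a : I -> R) :
    (forall y, 0 <= a y <= 1) ->
  expR (4 / 3 * \sum_(y in S) a y) <= \prod_(y in S) (1 + 3 * a y).
Proof.
move=> a01; rewrite mulr_sumr expR_sum; apply: ler_prod => y _.
rewrite expR_ge0 /=; apply: le_trans (expRM_le_chord _ (a01 y)) _.
have := expR_four_thirds_le; case/andP: (a01 y); nra.
Qed.

Lemma sum_draws_prod1D_le_expR (I : finType) (T : {set I}) (k : nat) (b : I -> R) :
    (k <= #|T|)%N -> (forall y, 0 <= b y) ->
  \sum_(S in draws T k) \prod_(y in S) (1 + b y)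
    <= 'C(#|T|, k)%:R * expR (k%:R / #|T|%:R * \sum_(y in T) b y).
Proof.
move=> kT b_ge0; apply: le_trans (sum_draws_prod1D_le kT b_ge0) _.
rewrite ler_wpM2l // mulr_sumr expR_sum; apply: ler_prod => y _.
by rewrite expR_ge1Dx andbT addr_ge0 ?mulr_ge0 ?divr_ge0.
Qed.

Lemma tail_exponent_le (p l W X : R) : 0 <= p <= 1 / 12 -> 0 <= l -> 0 <= W ->
  4 * p * (W - X) + 2 * l < X -> 3 * p * W + 2 * l <= 4 / 3 * X.
Proof.
case/andP=> p0 p12 l0 W0 tail.
have hW : 0 <= p * W * (4 / 3 - 12 * p) by rewrite !mulr_ge0 //; lra.
have hl : 0 <= l * (2 / 3 - 8 * p) by rewrite mulr_ge0 //; lra.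
nra.
Qed.

End ExponentialMoments.

Section ChernoffTail.

Variables (R : realType) (I : finType) (T : {set I}) (k : nat) (a : I -> R).
Hypothesis a01 : forall y, 0 <= a y <= 1.
Hypothesis k_small : (12 * k <= #|T|)%N.

Let p : R := k%:R / #|T|%:R.
Let W : R := \sum_y a y.
Let X (S : {set I}) : R := \sum_(y in S) a y.

Lemma card_draws_tail_le (l : R) : 0 <= l ->
  (#|[set S in draws T k | 4 * p * (W - X S) + 2 * l < X S]|%:R : R)
    <= 'C(#|T|, k)%:R * expR (- (2 * l)).
Proof.
move=> l0; set B := [set S in _ | _].
have kT : (k <= #|T|)%N by apply: leq_trans k_small; rewrite leq_pmull.
have p0 : 0 <= p by rewrite divr_ge0.
have p12 : p <= 1 / 12.
  rewrite /p; have [->|T0] := posnP #|T|; first by rewrite invr0 mulr0.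
  rewrite ler_pdivrMr ?ltr0n //.
  by have := k_small; rewrite -(ler_nat R) natrM; lra.
have a0 y : 0 <= a y by case/andP: (a01 y).
have W0 : 0 <= W by apply: sumr_ge0.
have BD : B \subset draws T k by apply/fintype.subsetP => S; rewrite inE => /andP[].
have markov : #|B|%:R * expR (3 * p * W + 2 * l)
    <= \sum_(S in draws T k) \prod_(y in S) (1 + 3 * a y).
  rewrite [X in _ <= X](big_setID B) /= (finset.setIidPr BD).
  apply: (@le_trans _ _ (\sum_(S in B) \prod_(y in S) (1 + 3 * a y))); last first.
    by rewrite lerDl; apply: sumr_ge0 => S _; apply: prodr_ge0 => y _; rewrite addr_ge0 ?mulr_ge0.
  rewrite mulrC mulr_natr -sumr_const; apply: ler_sum => S; rewrite inE => /andP[_ tail].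
  apply: le_trans (expR_sum_le_prod1D S a01); rewrite ler_expR.
  exact: tail_exponent_le (introT andP (conj p0 p12)) l0 W0 tail.
have moment : \sum_(S in draws T k) \prod_(y in S) (1 + 3 * a y)
    <= 'C(#|T|, k)%:R * expR (3 * p * W).
  apply: le_trans (sum_draws_prod1D_le_expR kT (fun y => mulr_ge0 _ (a0 y))) _ => //.
  rewrite ler_wpM2l // ler_expR -mulr_sumr mulrA (mulrC p) ler_wpM2l ?mulr_ge0 //.
  by rewrite /W [X in _ <= X](bigID (mem T)) /= lerDl sumr_ge0.
have := le_trans markov moment.
rewrite -ler_pdivlMr ?expR_gt0 // => /le_trans; apply.
by rewrite -[X in X <= _]mulrA -expRB (_ : 3 * p * W - _ = - (2 * l)) //; lra.
Qed.

End ChernoffTail.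

Section RandomHalfSubsets.

Variables (R : realType) (n : nat) (e : rel 'I_n) (c : 'I_n -> R).
Variables (T : {set 'I_n}) (k : nat).
Hypothesis c01 : forall y, 0 <= c y <= 1.
Hypothesis T_half : #|T| = n./2.
Hypothesis k_small : (12 * k <= n./2)%N.

Let nbr (x y : 'I_n) : R := if e x y then c y else 0.

Lemma not_good_setP S : ~~ good_set e c k S -> exists x,
  4 * (k%:R / #|T|%:R) * (\sum_y nbr x y - \sum_(y in S) nbr x y) + 2 * ln n%:R
    < \sum_(y in S) nbr x y.
Proof.
rewrite negb_forall => /existsP[x]; rewrite -ltNge => bad; exists x.
have -> : \sum_(y in S) nbr x y = \sum_(y in S | e x y) c y by rewrite big_mkcondr.
have -> : \sum_y nbr x y = \sum_(y in S | e x y) c y + \sum_(y in ~: S | e x y) c y.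
  rewrite (bigID (mem S)) /= !big_mkcondr; congr (_ + _).
  by apply: eq_bigl => y; rewrite inE.
by rewrite [_ + _ - _]addrC addKr mulrA -natrM T_half.
Qed.

Lemma card_bad_draws_le :
  (#|[set S in draws T k | ~~ good_set e c k S]|%:R : R)
    <= 'C(#|T|, k)%:R / n%:R.
Proof.
pose B x := [set S in draws T k | 4 * (k%:R / #|T|%:R)
  * (\sum_y nbr x y - \sum_(y in S) nbr x y) + 2 * ln n%:R < \sum_(y in S) nbr x y].
have bad_cover : [set S in draws T k | ~~ good_set e c k S] \subset \bigcup_x B x.
  apply/fintype.subsetP => S; rewrite inE => /andP[ST /not_good_setP[x tail]].
  by apply/bigcupP; exists x => //; rewrite inE ST.
have nbr01 x y : 0 <= nbr x y <= 1 by rewrite /nbr; case: (e x y) => //; rewrite lexx ler01.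
have kT : (12 * k <= #|T|)%N by rewrite T_half.
apply: le_trans (_ : \sum_(x : 'I_n) 'C(#|T|, k)%:R * expR (- (2 * ln n%:R)) <= _).
  apply: (@le_trans _ _ (\sum_x #|B x|)%:R).
    by rewrite ler_nat (leq_trans (subset_leq_card bad_cover)) ?card_bigcup_leq.
  rewrite natr_sum; apply: ler_sum => x _.
  apply: card_draws_tail_le (nbr01 x) kT _ _.
  by rewrite ln_ge0 // ler1n (leq_ltn_trans _ (ltn_ord x)).
rewrite sumr_const card_ord expRN expRM_natl -[_ *+ n]mulr_natr.
have [->|n_neq0] := eqVneq (n%:R : R) 0; first by rewrite mulr0 invr0 mulr0.
have n_gt0 : (0 : R) < n%:R by rewrite lt0r n_neq0 ler0n.
by rewrite lnK ?posrE // le_eqVlt; apply/predU1l; field.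
Qed.

Lemma prob_good_ge : 1 - n%:R^-1 <= prob_good e c T k.
Proof.
have C_gt0 : (0 < 'C(#|T|, k))%N by rewrite bin_gt0 T_half; lia.
have good_bad : #|[set S : {set 'I_n} | (S \subset T) && (#|S| == k) && good_set e c k S]|
    + #|[set S in draws T k | ~~ good_set e c k S]| = 'C(#|T|, k).
  rewrite -cards_draws -(cardsID [set S : {set 'I_n} | good_set e c k S] (draws T k)).
  by congr (_ + _)%N; apply: eq_card => S; rewrite !inE // andbC.
rewrite /prob_good ler_pdivlMr ?ltr0n // -good_bad natrD.
have := card_bad_draws_le; rewrite -good_bad natrD; lra.
Qed.

End RandomHalfSubsets.

Local Open Scope classical_set_scope.

Theorem lemma11 (R : realType) :
  exists eps : nat -> R, eps m @[m --> \oo] --> (0 : R) /\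
    forall (n : nat) (e : rel 'I_n) (c : 'I_n -> R) (T : {set 'I_n}) (k : nat),
      simple_graph e ->
      (forall y, 0 <= c y <= 1) ->
      ~~ odd n ->
      #|T| = n./2 ->
      (12 * k <= n./2)%N ->
      1 - eps n <= prob_good e c T k.
Proof.
exists (fun m => harmonic m * 2); split.
  by rewrite -(mul0r 2); apply: cvgMr_tmp; exact: cvg_harmonic.
move=> n e c T k _ c01 _ T_half k_small.
apply: le_trans (prob_good_ge e c01 T_half k_small); rewrite lerD2l lerN2 /=.
case: n {e c T c01 T_half k_small} => [|m]; first by rewrite invr0 mulr_ge0.
rewrite mulrC -[X in X <= _]div1r ler_pdivrMr ?ltr0n //.
by rewrite mulrAC ler_pdivlMr ?ltr0n // mul1r -natrM ler_nat; lia.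
Qed.
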